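(* Let $\Gamma=(V,m,\tau)$ be a weak $W$-graph and let $A\subseteq\Delta$. Then the representation $\mathbb{C}V$, restricted to $W(A)$, contains a copy of the trivial representation of $W(A)$ if and only if $A\cap\tau(v)=\emptyset$ for some $v\in V$.
   Context: $W$ is a Weyl group with a fixed set $\Delta$ of simple roots; for a root $\alpha$, $s_\alpha$ is the reflection in the hyperplane orthogonal to $\alpha$. A weak $W$-graph is a triple $\Gamma=(V,m,\tau)$ where $V$ is a finite set, $m:V\times V\to\mathbb{C}$ is a map, and $\tau$ is a map from $V$ to the power set of $\Delta$, such that the linear maps $s_\alpha:\mathbb{C}V\to\mathbb{C}V$ ($\alpha\in\Delta$) given on basis vectors by $s_\alpha(v)=-v$ if $\alpha\in\tau(v)$ and $s_\alpha(v)=v-\sum_{u\in V,\ \alpha\in\tau(u)} m(u,v)u$ if $\alpha\notin\tau(v)$ define a representation of $W$ on $\mathbb{C}V$. For $A\subseteq\Delta$, $W(A)$ is the subgroup of $W$ generated by $\{s_\alpha:\alpha\in A\}$. *)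

From HB Require Import structures.
From mathcomp Require Import all_boot all_order all_algebra.
From mathcomp Require Import reals complex.
Set Implicit Arguments. Unset Strict Implicit. Unset Printing Implicit Defensive.
Import Order.TTheory GRing.Theory Num.Theory.
Local Open Scope ring_scope.

Section RootSystems.
Variables (R : realType) (n : nat).

Definition dot (u v : 'rV[R]_n) : R := (u *m v^T) ord0 ord0.

(* reflection in the hyperplane orthogonal to a, acting on row vectors by
   right multiplication: x *m refl a = x - (2 (x,a)/(a,a)) a *)
Definition refl (a : 'rV[R]_n) : 'M[R]_n :=
  1%:M - (2 / dot a a) *: (a^T *m a).

Definition rows_of (s : seq 'rV[R]_n) : 'M[R]_(size s, n) :=
  \matrix_(i < size s) nth 0 s i.

Definition is_root_system (Phi : seq 'rV[R]_n) : Prop :=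
  [/\ (0 : 'rV[R]_n) \notin Phi,
      row_full (rows_of Phi),
      (forall a (c : R), a \in Phi -> c *: a \in Phi -> c = 1 \/ c = -1),
      (forall a b, a \in Phi -> b \in Phi -> b *m refl a \in Phi) &
      (forall a b, a \in Phi -> b \in Phi ->
         exists z : int, 2 * dot b a / dot a a = z%:~R)].

Definition is_base (Phi : seq 'rV[R]_n) (I : finType) (delta : I -> 'rV[R]_n)
  : Prop :=
  [/\ (forall i, delta i \in Phi),
      (forall c : I -> R, \sum_i c i *: delta i = 0 -> forall i, c i = 0) &
      (forall b, b \in Phi -> exists c : I -> nat,
          b = \sum_i (c i)%:R *: delta i \/ b = - \sum_i (c i)%:R *: delta i)].

Definition refl_word (l : seq 'rV[R]_n) : 'M[R]_n :=
  foldr (fun a g => refl a *m g) 1%:M l.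

(* the Weyl group W: the group generated by the reflections s_a, a in Phi
   (finite products suffice since reflections are involutions) *)
Definition in_Weyl (Phi : seq 'rV[R]_n) (g : 'M[R]_n) : Prop :=
  exists l : seq 'rV[R]_n, all (mem Phi) l /\ g = refl_word l.

Definition in_parabolic (I : finType) (delta : I -> 'rV[R]_n) (A : {set I})
  (g : 'M[R]_n) : Prop :=
  exists l : seq I, all (mem A) l /\ g = refl_word (map delta l).

End RootSystems.

Section WGraphs.
Variables (R : realType) (V I : finType).
Local Notation C := (complex R).

(* The linear map s_i on CV (basis V, column vectors, indices via enum_val):
   s_i(v) = -v if i in tau v, else v - sum_{u : i in tau u} m(u,v) u. *)
Definition wg_mat (m : V -> V -> C) (tau : V -> {set I}) (i : I)
  : 'M[C]_#|V| :=
  \matrix_(p, q)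
    (let u := enum_val p in let v := enum_val q in
     if i \in tau v then - (u == v)%:R
     else (u == v)%:R - (if i \in tau u then m u v else 0)).

Definition is_wg_rep (n : nat) (Phi : seq 'rV[R]_n) (delta : I -> 'rV[R]_n)
  (m : V -> V -> C) (tau : V -> {set I}) (rho : 'M[R]_n -> 'M[C]_#|V|) : Prop :=
  [/\ rho 1%:M = 1%:M,
      (forall g h, in_Weyl Phi g -> in_Weyl Phi h -> rho (g *m h) = rho g *m rho h) &
      (forall i, rho (refl (delta i)) = wg_mat m tau i)].

Definition weak_W_graph (n : nat) (Phi : seq 'rV[R]_n) (delta : I -> 'rV[R]_n)
  (m : V -> V -> C) (tau : V -> {set I}) : Prop :=
  exists rho, is_wg_rep Phi delta m tau rho.

End WGraphs.

From mathcomp Require Import all_boot all_algebra.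
From mathcomp Require Import reals complex.
From Stdlib Require Import Classical.
Set Implicit Arguments. Unset Strict Implicit. Unset Printing Implicit Defensive.
Import GRing.Theory Num.Theory.
Local Open Scope ring_scope.

(* Summing rho over the finite group W(A) gives an operator P with
   rho(g) P = P = P rho(g), while P x = |W(A)| x and f P = |W(A)| f for fixed
   column and row vectors x, f.  Hence W(A) fixes a nonzero column vector iff
   P <> 0, iff it fixes a nonzero row vector, i.e. iff the trivial
   representation occurs in the dual.  The
   dual is explicit: a row vector f with f s_i = f vanishes at every v with
   i in tau v, because s_i multiplies the column of such a v by -1; and the
   indicator of {v | A :&: tau v = set0} is fixed by every s_i, i in A.
   Finiteness of W(A) comes from its faithful action on the finite set Phi. *)

Lemma perm_map_stable (T : eqType) (f : T -> T) (s : seq T) :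
  uniq s -> injective f -> (forall x, x \in s -> f x \in s) ->
  perm_eq (map f s) s.
Proof.
move=> s_uniq f_inj f_s; have fs_uniq : uniq (map f s) by rewrite map_inj_uniq.
apply: uniq_perm => //; apply: (uniq_min_size fs_uniq _ _).2.
- by move=> _ /mapP[x sx ->]; apply: f_s.
- by rewrite size_map.
Qed.

Lemma uniq_enum_of_inj (T : eqType) (F : finType) (S : T -> Prop) (code : T -> F) :
  (forall x y, S x -> S y -> code x = code y -> x = y) ->
  exists s : seq T, uniq s /\ forall x, S x <-> x \in s.
Proof.
move=> code_inj.
suff [s [sS Ss]] : exists s : seq T,
    (forall x, x \in s -> S x) /\ (forall x, S x -> code x \in enum F -> x \in s).
  exists (undup s); split=> [|x]; first exact: undup_uniq.
  by rewrite mem_undup; split=> [Sx|/sS//]; apply: Ss; rewrite ?mem_enum.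
elim: (enum F) => [|c L [s [sS Ss]]]; first by exists [::].
have [[x [Sx cx]]|no_x] := classic (exists x, S x /\ code x = c).
  exists (x :: s); split=> [y|y Sy].
    by rewrite in_cons => /predU1P[->|/sS].
  rewrite !in_cons => /predU1P[cy|Ly]; last by rewrite Ss ?orbT.
  by rewrite (code_inj y x) ?eqxx // cy cx.
exists s; split=> // y Sy; rewrite in_cons => /predU1P[cy|]; last exact: Ss.
by case: no_x; exists y.
Qed.

Section FixedVectorsOfFiniteGroup.
Variables (R : comUnitRingType) (n : nat) (K : idomainType) (N : nat).
Variables (G : seq 'M[R]_n) (rho : 'M[R]_n -> 'M[K]_N).
Hypothesis G_uniq : uniq G.
Hypothesis G_unit : {subset G <= unitmx}.
Hypothesis G_mul : {in G &, forall g h, g *m h \in G}.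
Hypothesis rhoM : {in G &, forall g h, rho (g *m h) = rho g *m rho h}.
Hypothesis size_G_neq0 : (size G)%:R != 0 :> K.

Definition reynolds : 'M[K]_N := \sum_(g <- G) rho g.

Lemma reynolds_mulmx h : h \in G -> reynolds *m rho h = reynolds.
Proof.
move=> Gh; have G_h : perm_eq [seq g *m h | g <- G] G.
  by apply: perm_map_stable (can_inj (mulmxK (G_unit Gh))) _ => // g Gg; apply: G_mul.
rewrite /reynolds mulmx_suml -[RHS](perm_big _ G_h) big_map.
by apply: eq_big_seq => g Gg; rewrite rhoM.
Qed.

Lemma mulmx_reynolds h : h \in G -> rho h *m reynolds = reynolds.
Proof.
move=> Gh; have h_G : perm_eq [seq h *m g | g <- G] G.
  by apply: perm_map_stable (can_inj (mulKmx (G_unit Gh))) _ => // g Gg; apply: G_mul.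
rewrite /reynolds mulmx_sumr -[RHS](perm_big _ h_G) big_map.
by apply: eq_big_seq => g Gg; rewrite rhoM.
Qed.

Lemma scale_size_G_neq0 p q (A : 'M[K]_(p, q)) : A != 0 -> (size G)%:R *: A != 0.
Proof. by rewrite scalemx_eq0 negb_or size_G_neq0. Qed.

Lemma reynolds_neq0_of_fixed_col (x : 'cV[K]_N) :
  x != 0 -> (forall g, g \in G -> rho g *m x = x) -> reynolds != 0.
Proof.
move=> nz_x fix_x; have : reynolds *m x != 0.
  rewrite /reynolds mulmx_suml (eq_big_seq (fun=> x)) // big_const_seq.
  by rewrite count_predT iter_addr_0 -scaler_nat scale_size_G_neq0.
by apply: contraNneq => ->; rewrite mul0mx.
Qed.

Lemma reynolds_neq0_of_fixed_row (f : 'rV[K]_N) :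
  f != 0 -> (forall g, g \in G -> f *m rho g = f) -> reynolds != 0.
Proof.
move=> nz_f fix_f; have : f *m reynolds != 0.
  rewrite /reynolds mulmx_sumr (eq_big_seq (fun=> f)) // big_const_seq.
  by rewrite count_predT iter_addr_0 -scaler_nat scale_size_G_neq0.
by apply: contraNneq => ->; rewrite mulmx0.
Qed.

Lemma fixed_col_neq0_iff_row :
  (exists x : 'cV[K]_N, x != 0 /\ forall g, g \in G -> rho g *m x = x) <->
  (exists f : 'rV[K]_N, f != 0 /\ forall g, g \in G -> f *m rho g = f).
Proof.
split=> [[x [nz_x fix_x]] | [f [nz_f fix_f]]].
- have [i [j nz_ij]] := matrix0Pn _ (reynolds_neq0_of_fixed_col nz_x fix_x).
  exists (row i reynolds); split=> [|g Gg]; last by rewrite -row_mul reynolds_mulmx.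
  by apply/rV0Pn; exists j; rewrite mxE.
- have [i [j nz_ij]] := matrix0Pn _ (reynolds_neq0_of_fixed_row nz_f fix_f).
  exists (col j reynolds); split=> [|g Gg].
    by apply/cV0Pn; exists i; rewrite mxE.
  by rewrite !colE mulmxA mulmx_reynolds.
Qed.

End FixedVectorsOfFiniteGroup.

Lemma refl_word_cat (R : realType) n (l1 l2 : seq 'rV[R]_n) :
  refl_word (l1 ++ l2) = refl_word l1 *m refl_word l2.
Proof. by elim: l1 => [|a l IHl] /=; rewrite ?mul1mx // IHl mulmxA. Qed.

Lemma dot_self_neq0 (R : realType) n (a : 'rV[R]_n) : a != 0 -> dot a a != 0.
Proof.
apply: contra_neq; rewrite /dot mxE => a2_eq0; apply/rowP => j; rewrite mxE.
have /psumr_eq0P a2j0 : \sum_(k < n) a 0 k ^+ 2 = 0.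
  by rewrite -[RHS]a2_eq0; apply: eq_bigr => k _; rewrite mxE.
by apply/eqP; rewrite -sqrf_eq0 a2j0 // => k _; apply: sqr_ge0.
Qed.

Lemma reflK (R : realType) n (a : 'rV[R]_n) : a != 0 -> refl a *m refl a = 1%:M.
Proof.
move=> /dot_self_neq0 aa_neq0.
have aTa2 : (a^T *m a) *m (a^T *m a) = dot a a *: (a^T *m a).
  by rewrite mulmxA -(mulmxA a^T) (mx11_scalar (a *m a^T)) mul_mx_scalar -scalemxAl.
rewrite /refl mulmxBl !mulmxBr !mul1mx mulmx1 -!scalemxAl -!scalemxAr aTa2 !scalerA.
have -> : 2 / dot a a * (2 / dot a a) * dot a a = 2 / dot a a + 2 / dot a a.
  by rewrite -mulrA divfK // mulr_natr mulr2n.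
by rewrite scalerDl opprB addrK subrK.
Qed.

Section WeylGroup.
Variables (R : realType) (n : nat) (Phi : seq 'rV[R]_n).
Variables (I : finType) (delta : I -> 'rV[R]_n).
Hypothesis root_Phi : is_root_system Phi.
Hypothesis base_delta : is_base Phi delta.

Lemma Weyl_stable g b : in_Weyl Phi g -> b \in Phi -> b *m g \in Phi.
Proof.
have [_ _ _ refl_Phi _] := root_Phi; case=> l [/allP l_Phi ->] {g}.
elim: l l_Phi b => [|a l IHl] l_Phi b Phi_b /=; first by rewrite mulmx1.
rewrite mulmxA; apply: IHl => [c lc|]; first by apply: l_Phi; rewrite mem_behead.
by apply: refl_Phi => //; apply: l_Phi; rewrite mem_head.
Qed.

Lemma eq_on_roots (g h : 'M[R]_n) : (forall b, b \in Phi -> b *m g = b *m h) -> g = h.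
Proof.
have [_ full_Phi _ _ _] := root_Phi => gh; apply: (row_full_inj full_Phi).
by apply/row_matrixP => i; rewrite !row_mul rowK gh ?mem_nth.
Qed.

Lemma delta_neq0 i : delta i != 0.
Proof.
have [Phi_neq0 _ _ _ _] := root_Phi; have [Phi_delta _ _] := base_delta.
by apply: contraNneq Phi_neq0 => <-.
Qed.

Lemma in_Weyl_parabolic A g : in_parabolic delta A g -> in_Weyl Phi g.
Proof.
have [Phi_delta _ _] := base_delta; case=> l [_ ->].
exists (map delta l); split=> //.
by apply/allP => _ /mapP[i _ ->]; apply: Phi_delta.
Qed.

Variable A : {set I}.

Lemma in_parabolic1 : in_parabolic delta A 1%:M.
Proof. by exists [::]. Qed.

Lemma in_parabolic_refl i : i \in A -> in_parabolic delta A (refl (delta i)).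
Proof. by move=> Ai; exists [:: i]; rewrite /= Ai mulmx1. Qed.

Lemma in_parabolic_mul g h :
  in_parabolic delta A g -> in_parabolic delta A h -> in_parabolic delta A (g *m h).
Proof.
case=> [lg [Alg ->]] [lh [Alh ->]]; exists (lg ++ lh).
by rewrite all_cat Alg Alh map_cat refl_word_cat.
Qed.

Lemma parabolic_unit g : in_parabolic delta A g -> g \in unitmx.
Proof.
case=> l [_ ->] {g}; elim: l => [|i l IHl] /=; first exact: unitmx1.
by rewrite unitmx_mul IHl andbT; case: (mulmx1_unit (reflK (delta_neq0 i))).
Qed.

Lemma parabolic_finite :
  exists gs : seq 'M[R]_n, uniq gs /\ forall g, in_parabolic delta A g <-> g \in gs.
Proof.
pose code (g : 'M[R]_n) : {ffun 'I_(size Phi) -> 'I_(size Phi).+1} :=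
  [ffun i : 'I_(size Phi) => inord (index (nth 0 Phi i *m g) Phi)].
apply: (@uniq_enum_of_inj _ _ _ code) => g h /in_Weyl_parabolic Wg /in_Weyl_parabolic Wh.
move=> /ffunP code_gh; apply: eq_on_roots => b Phi_b.
have [i Phi_i] : exists i : 'I_(size Phi), nth 0 Phi i = b.
  have ib : (index b Phi < size Phi)%N by rewrite index_mem.
  by exists (Ordinal ib); rewrite /= nth_index.
have := congr1 val (code_gh i); rewrite !ffunE /= !inordK ?ltnS ?index_size //.
by rewrite -Phi_i => /(congr1 (nth 0 Phi)); rewrite !nth_index ?Weyl_stable ?mem_nth.
Qed.

Variables (K : numDomainType) (N : nat) (rho : 'M[R]_n -> 'M[K]_N).
Hypothesis rhoM : forall g h, in_Weyl Phi g -> in_Weyl Phi h ->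
  rho (g *m h) = rho g *m rho h.

Lemma parabolic_fixed_col_neq0_iff_row :
  (exists x : 'cV[K]_N, x != 0 /\ forall g, in_parabolic delta A g -> rho g *m x = x) <->
  (exists f : 'rV[K]_N, f != 0 /\ forall g, in_parabolic delta A g -> f *m rho g = f).
Proof.
have [gs [gs_uniq gsP]] := parabolic_finite.
have parabolic_gs (P : 'M[R]_n -> Prop) :
    (forall g, in_parabolic delta A g -> P g) <-> (forall g, g \in gs -> P g).
  by split=> PA g /gsP; apply: PA.
have size_gs : (size gs)%:R != 0 :> K.
  by have /gsP := in_parabolic1; rewrite pnatr_eq0; case: (gs).
have rhoM_gs : {in gs &, forall g h, rho (g *m h) = rho g *m rho h}.
  by move=> g h /gsP/in_Weyl_parabolic Wg /gsP/in_Weyl_parabolic Wh; apply: rhoM.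
have gs_unit : {subset gs <= unitmx} by move=> g /gsP/parabolic_unit.
have gs_mul : {in gs &, forall g h, g *m h \in gs}.
  by move=> g h /gsP Ag /gsP Ah; apply/gsP/in_parabolic_mul.
have [col_row row_col] := fixed_col_neq0_iff_row gs_uniq gs_unit gs_mul rhoM_gs size_gs.
split=> -[x [nz_x /parabolic_gs fix_x]].
- have [f [nz_f /parabolic_gs fix_f]] := col_row (ex_intro _ x (conj nz_x fix_x)).
  by exists f.
- have [y [nz_y /parabolic_gs fix_y]] := row_col (ex_intro _ x (conj nz_x fix_x)).
  by exists y.
Qed.

End WeylGroup.

Lemma sum_mul_eq_enum_val (K : pzSemiRingType) (T : finType) (F : 'I_#|T| -> K) q :
  \sum_p F p * (enum_val p == enum_val q)%:R = F q.
Proof.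
rewrite (bigD1 q) //= eqxx mulr1 big1 ?addr0 // => p /negbTE neq_pq.
by rewrite (inj_eq enum_val_inj) neq_pq mulr0.
Qed.

Section WGraphMatrices.
Variables (R : realType) (V I : finType).
Variables (m : V -> V -> complex R) (tau : V -> {set I}).

Lemma wg_mat_fixed_row_eq0 (f : 'rV[complex R]_#|V|) i q :
  i \in tau (enum_val q) -> f *m wg_mat m tau i = f -> f 0 q = 0.
Proof.
move=> tau_i /rowP/(_ q); rewrite mxE.
under eq_bigr => p _ do rewrite [wg_mat _ _ _ _ _]mxE /= tau_i mulrN.
by rewrite sumrN sum_mul_eq_enum_val => /eqP; rewrite eqNr => /eqP.
Qed.

Definition tau_free_row (A : {set I}) : 'rV[complex R]_#|V| :=
  \row_q (A :&: tau (enum_val q) == set0)%:R.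

(* The indicator vanishes at every u with i in tau u, and these are the only
   rows where s_i differs from the identity. *)
Lemma tau_free_row_fixed (A : {set I}) i :
  i \in A -> tau_free_row A *m wg_mat m tau i = tau_free_row A.
Proof.
move=> Ai; set f := tau_free_row A.
have f_tau p : i \in tau (enum_val p) -> f 0 p = 0.
  by move=> tau_i; rewrite mxE; case: eqP => // /setP/(_ i); rewrite !inE Ai tau_i.
apply/rowP => q; rewrite mxE.
have [tau_i|ntau_i] := boolP (i \in tau (enum_val q)).
  under eq_bigr => p _ do rewrite [wg_mat _ _ _ _ _]mxE /= tau_i mulrN.
  by rewrite sumrN sum_mul_eq_enum_val f_tau // oppr0.
rewrite -[RHS](sum_mul_eq_enum_val (f 0)); apply: eq_bigr => p _.
rewrite [wg_mat _ _ _ _ _]mxE /= (negbTE ntau_i).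
by have [/f_tau->|_] := boolP (i \in tau (enum_val p)); rewrite ?mul0r ?subr0.
Qed.

End WGraphMatrices.

Section WGraphRepresentation.
Variables (R : realType) (n : nat) (Phi : seq 'rV[R]_n).
Variables (I : finType) (delta : I -> 'rV[R]_n) (V : finType).
Variables (m : V -> V -> complex R) (tau : V -> {set I}).
Variables (rho : 'M[R]_n -> 'M[complex R]_#|V|) (A : {set I}).
Hypothesis base_delta : is_base Phi delta.
Hypothesis wg_rho : is_wg_rep Phi delta m tau rho.

Lemma parabolic_fixed_row (f : 'rV[complex R]_#|V|) :
  (forall i, i \in A -> f *m wg_mat m tau i = f) ->
  forall g, in_parabolic delta A g -> f *m rho g = f.
Proof.
have [rho1 rhoM rho_refl] := wg_rho.
move=> f_fixed _ [l [Al ->]]; elim: l Al => [|i l IHl] /=; first by rewrite rho1 mulmx1.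
case/andP=> Ai Al; have Wl : in_Weyl Phi (refl_word (map delta l)).
  by apply: (in_Weyl_parabolic base_delta (A := A)); exists l.
rewrite rhoM //; first by rewrite mulmxA rho_refl f_fixed // IHl.
exact: (in_Weyl_parabolic base_delta (in_parabolic_refl delta Ai)).
Qed.

Lemma parabolic_fixed_row_neq0_iff :
  (exists f : 'rV[complex R]_#|V|, f != 0 /\
     forall g, in_parabolic delta A g -> f *m rho g = f)
  <-> (exists v : V, A :&: tau v = set0).
Proof.
have [_ _ rho_refl] := wg_rho.
split=> [[f [/rV0Pn[q nz_fq] fixed_f]] | [v Av]].
  exists (enum_val q); apply/eqP; apply: contraNT nz_fq => /set0Pn[i /setIP[Ai tau_i]].
  have fixed_i : f *m wg_mat m tau i = f.
    by rewrite -rho_refl; apply/fixed_f/in_parabolic_refl.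
  by rewrite (wg_mat_fixed_row_eq0 tau_i fixed_i).
exists (tau_free_row _ tau A); split.
  by apply/rV0Pn; exists (enum_rank v); rewrite mxE enum_rankK Av eqxx oner_eq0.
by apply: parabolic_fixed_row => i Ai; apply: tau_free_row_fixed.
Qed.

End WGraphRepresentation.

Theorem corollary2p7 (R : realType) (n : nat) (Phi : seq 'rV[R]_n)
  (I : finType) (delta : I -> 'rV[R]_n) (V : finType)
  (m : V -> V -> complex R) (tau : V -> {set I})
  (rho : 'M[R]_n -> 'M[complex R]_#|V|) (A : {set I}) :
  is_root_system Phi -> is_base Phi delta ->
  is_wg_rep Phi delta m tau rho ->
  (exists x : 'cV[complex R]_#|V|,
     x != 0 /\ forall g, in_parabolic delta A g -> rho g *m x = x)
  <-> (exists v : V, A :&: tau v = set0).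
Proof.
move=> root_Phi base_delta wg_rho; have [_ rhoM _] := wg_rho.
apply: iff_trans (parabolic_fixed_row_neq0_iff A base_delta wg_rho).
exact: (parabolic_fixed_col_neq0_iff_row root_Phi base_delta A rhoM).
Qed.
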